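(* Let $X$ be a noncommutative space embedded in $\mathcal A^m$ and $e=\tilde E^j\ast E_j$. Equip $TX=\mathcal A^m\ast e$ and $\tilde TX=e\ast{}^m\!\mathcal A$ with the canonical connections $\nabla_i\zeta=\partial_i\zeta-\zeta\ast\partial_ie$ and $\tilde\nabla_i\xi=\partial_i\xi-\partial_i(e)\ast\xi$. Then for all $i,j$: $$\nabla_iE_j=\Gamma_{ij}^k\ast E_k,\qquad \tilde\nabla_i\tilde E^j=-\tilde E^k\ast\Gamma_{ki}^j,$$ and equivalently $\nabla_iE^j=-\tilde\Gamma^j_{ik}\ast E^k$ and $\tilde\nabla_i(E_j)^t=(E_k)^t\ast\tilde\Gamma^k_{ij}$, where $E^j=g^{jk}\ast E_k$.
   Context: $\mathcal A$ denotes the Moyal algebra: for $U\subset\mathbb R^n$ open with coordinates $t$ and $\hbar$ a formal real indeterminate, $\mathcal A$ is the set of formal power series $\sum_{i\ge0}f_i\hbar^i$ with real smooth coefficients on $U$, with product $(f\ast g)(t)=\lim_{t'\to t}\exp\big(\hbar\sum_{i,j}\theta_{ij}\frac{\partial}{\partial t^i}\frac{\partial}{\partial t'^j}\big)f(t)g(t')$ for a fixed constant real skew-symmetric $\theta$ (associative, unital; $\partial_i=\partial/\partial t^i$ are derivations, acting entrywise on matrices). Matrices over $\mathcal A$ are multiplied using $\ast$; $\mathcal A^m$ row vectors, ${}^m\!\mathcal A$ column vectors. Einstein summation. For $X=(X^1,\dots,X^m)\in\mathcal A^m$, $g_{ij}=\sum_\alpha\partial_iX^\alpha\ast\partial_jX^\alpha$;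 $X$ is a noncommutative space embedded in $\mathcal A^m$ if $(g_{ij})$ is invertible, inverse $(g^{ij})$. $E_i=\partial_iX$, $(E_i)^t$ its transpose, $\tilde E^i=(E_j)^t\ast g^{ji}$. Define ${}_c\Gamma_{ijl}=\tfrac12(\partial_ig_{jl}+\partial_jg_{li}-\partial_lg_{ji})$, $\Upsilon_{ijl}=\tfrac12(\partial_i(E_j)\ast(E_l)^t-E_l\ast\partial_i(E_j)^t)$, $\Gamma_{ijl}={}_c\Gamma_{ijl}+\Upsilon_{ijl}$, $\tilde\Gamma_{ijl}={}_c\Gamma_{ijl}-\Upsilon_{ijl}$, $\Gamma_{ij}^k=\Gamma_{ijl}\ast g^{lk}$, $\tilde\Gamma_{ij}^k=g^{kl}\ast\tilde\Gamma_{ijl}$. *)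

(* The Moyal algebra is abstracted to an associative unital
   R-algebra A with n pairwise commuting R-linear derivations d i. *)
From HB Require Import structures.
From mathcomp Require Import all_boot all_order all_algebra.
Set Implicit Arguments. Unset Strict Implicit. Unset Printing Implicit Defensive.
Import GRing.Theory.
Local Open Scope ring_scope.

Definition derivation_family (R : realFieldType) (A : algType R) (n : nat)
  (d : 'I_n -> A -> A) : Prop :=
  (forall i (a b : A), d i (a + b) = d i a + d i b) /\
  (forall i (c : R) (a : A), d i (c *: a) = c *: d i a) /\
  (forall i (a b : A), d i (a * b) = d i a * b + a * d i b) /\
  (forall i j (a : A), d i (d j a) = d j (d i a)).

Section NCSpace.
Variables (R : realFieldType) (A : algType R) (n m : nat).
Variable d : 'I_n -> A -> A.
Variable X : 'rV[A]_m.
Variable ginv : 'M[A]_n.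

Definition dmx (i : 'I_n) (p q : nat) (M : 'M[A]_(p, q)) : 'M[A]_(p, q) :=
  map_mx (d i) M.

Definition E (i : 'I_n) : 'rV[A]_m := dmx i X.

Definition metric : 'M[A]_n := \matrix_(i, j) (E i *m (E j)^T) ord0 ord0.

Definition Et (i : 'I_n) : 'cV[A]_m := \sum_j (E j)^T *m (ginv j i)%:M.

Definition eproj : 'M[A]_m := \sum_j Et j *m E j.

Definition nabla (i : 'I_n) (z : 'rV[A]_m) : 'rV[A]_m :=
  dmx i z - z *m dmx i eproj.
Definition nablat (i : 'I_n) (x : 'cV[A]_m) : 'cV[A]_m :=
  dmx i x - dmx i eproj *m x.

Definition cGamma (i j l : 'I_n) : A :=
  2^-1 *: (d i (metric j l) + d j (metric l i) - d l (metric j i)).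
Definition Ups (i j l : 'I_n) : A :=
  2^-1 *: ((dmx i (E j) *m (E l)^T) ord0 ord0
           - (E l *m dmx i (E j)^T) ord0 ord0).
Definition Gamma (i j l : 'I_n) : A := cGamma i j l + Ups i j l.
Definition Gammat (i j l : 'I_n) : A := cGamma i j l - Ups i j l.

Definition GammaU (i j k : 'I_n) : A := \sum_l Gamma i j l * ginv l k.
Definition GammatU (i j k : 'I_n) : A := \sum_l ginv k l * Gammat i j l.

Definition Eup (j : 'I_n) : 'rV[A]_m := \sum_k (ginv j k)%:M *m E k.

End NCSpace.

From HB Require Import structures.
From mathcomp Require Import all_boot all_order all_algebra.
Set Implicit Arguments. Unset Strict Implicit. Unset Printing Implicit Defensive.
Import GRing.Theory.
Local Open Scope ring_scope.

(* Everything is organised around the frame matrix F (n x m) whose k-th row is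
   E_k, so that g = F F^t, tilde E^k is the k-th column of T = F^t g^-1,
   E^k is the k-th row of S = g^-1 F, and e = T F = F^t S.  Then
   - F T = 1 and S F^t = 1, hence F e = F, e T = T, e F^t = F^t and S e = S;
   - differentiating "P e = P" gives d P - P d e = d P e, differentiating
     "e Q = Q" gives d Q - d e Q = e d Q, and differentiating "P Q = 1" gives
     d P Q = - P d Q (Leibniz rule for matrices over A);
   - because the derivations commute, Gamma_{ijl} = (d_i F F^t)_{jl} and
     tilde Gamma_{ijl} = (F (d_i F)^t)_{lj}, so the raised symbols are entries
     of d_i F F^t g^-1 and of g^-1 F (d_i F)^t.
   The four identities are thus four matrix identities (nabla_frame,
   nablat_coframe, nabla_dual_frame, nablat_tr_frame) read off row by row or
   column by column. *)

Lemma row_sum_scalar (A : nzRingType) p n q (C : 'M[A]_(p, n)) (M : 'M[A]_(n, q)) j :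
  \sum_k (C j k)%:M *m row k M = row j (C *m M).
Proof.
apply/matrixP => x y; rewrite summxE !mxE.
by apply: eq_bigr => k _; rewrite mul_scalar_mx !mxE.
Qed.

Lemma col_sum_scalar (A : nzRingType) p n q (C : 'M[A]_(n, q)) (M : 'M[A]_(p, n)) j :
  \sum_k col k M *m (C k j)%:M = col j (M *m C).
Proof.
apply/matrixP => x y; rewrite summxE !mxE.
apply: eq_bigr => k _; rewrite !mxE.
by rewrite (big_ord_recl 0) big_ord0 addr0 !mxE (ord1 y) eqxx mulr1n.
Qed.

Section Derivation.
Variables (R : realFieldType) (A : algType R) (n : nat) (d : 'I_n -> A -> A).
Hypothesis hd : derivation_family d.

Lemma derD i (a b : A) : d i (a + b) = d i a + d i b.
Proof. by case: hd. Qed.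

Lemma derM i (a b : A) : d i (a * b) = d i a * b + a * d i b.
Proof. by case: hd => _ [_ []]. Qed.

Lemma der_comm i j (a : A) : d i (d j a) = d j (d i a).
Proof. by case: hd => _ [_ []]. Qed.

Lemma der0 i : d i 0 = 0.
Proof. by apply: (addrI (d i 0)); rewrite -derD !addr0. Qed.

Lemma der1 i : d i 1 = 0.
Proof. by apply: (addrI (d i 1)); rewrite addr0 -{3}(mulr1 1) derM mulr1 mul1r. Qed.

Lemma der_sum i I (r : seq I) (P : pred I) (F : I -> A) :
  d i (\sum_(x <- r | P x) F x) = \sum_(x <- r | P x) d i (F x).
Proof. exact: (big_morph (d i) (derD i) (der0 i)). Qed.

Lemma dmxM i p q r (M : 'M[A]_(p, q)) (N : 'M[A]_(q, r)) :
  dmx d i (M *m N) = dmx d i M *m N + M *m dmx d i N.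
Proof.
apply/matrixP => x y; rewrite !mxE der_sum -big_split.
by apply: eq_bigr => t _; rewrite derM !mxE.
Qed.

Lemma dmx_tr i p q (M : 'M[A]_(p, q)) : dmx d i M^T = (dmx d i M)^T.
Proof. by apply/matrixP => x y; rewrite !mxE. Qed.

Lemma dmx1 i p : dmx d i (1%:M : 'M[A]_p) = 0.
Proof. by apply/matrixP => x y; rewrite !mxE; case: (x == y); rewrite ?der1 ?der0. Qed.

End Derivation.

Section Projection.
Variables (R : realFieldType) (A : algType R) (n : nat) (d : 'I_n -> A -> A).
Hypothesis hd : derivation_family d.
Variable i : 'I_n.
Local Notation D := (dmx d i).

Lemma dmx_right_fixed p q (P : 'M[A]_(p, q)) (e : 'M[A]_q) :
  P *m e = P -> D P - P *m D e = D P *m e.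
Proof. by move=> Pe; rewrite -{1}Pe dmxM // addrK. Qed.

Lemma dmx_left_fixed p q (Q : 'M[A]_(q, p)) (e : 'M[A]_q) :
  e *m Q = Q -> D Q - D e *m Q = e *m D Q.
Proof. by move=> eQ; rewrite -{1}eQ dmxM // addrC addKr. Qed.

Lemma dmx_right_inverse p q (P : 'M[A]_(p, q)) (Q : 'M[A]_(q, p)) :
  P *m Q = 1%:M -> D P *m Q = - (P *m D Q).
Proof. by move=> PQ; apply/eqP; rewrite -addr_eq0 -dmxM // PQ dmx1. Qed.

End Projection.

Section Frame.
Variables (R : realFieldType) (A : algType R) (n m : nat) (d : 'I_n -> A -> A).
Variables (X : 'rV[A]_m) (ginv : 'M[A]_n).

Definition frame : 'M[A]_(n, m) := \matrix_(k, a) E d X k 0 a.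
Definition coframe : 'M[A]_(m, n) := frame^T *m ginv.
Definition dual_frame : 'M[A]_(n, m) := ginv *m frame.

Lemma row_frame k : row k frame = E d X k.
Proof. by apply/matrixP => x y; rewrite !mxE (ord1 x). Qed.

Lemma col_tr_frame k : col k frame^T = (E d X k)^T.
Proof. by apply/matrixP => x y; rewrite !mxE (ord1 y). Qed.

Lemma col_coframe k : Et d X ginv k = col k coframe.
Proof. by rewrite -col_sum_scalar; apply: eq_bigr => l _; rewrite col_tr_frame. Qed.

Lemma row_dual_frame k : Eup d X ginv k = row k dual_frame.
Proof. by rewrite -row_sum_scalar; apply: eq_bigr => l _; rewrite row_frame. Qed.

Lemma metric_frame : metric d X = frame *m frame^T.
Proof. by apply/matrixP => x y; rewrite !mxE; apply: eq_bigr => a _; rewrite !mxE. Qed.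

Lemma eproj_frame : eproj d X ginv = coframe *m frame.
Proof.
apply/matrixP => x y; rewrite summxE !mxE; apply: eq_bigr => k _.
by rewrite col_coframe -row_frame !mxE big_ord1 !mxE.
Qed.

End Frame.

Lemma half_double (R : numFieldType) (V : lmodType R) (x : V) : 2^-1 *: (x + x) = x.
Proof. by rewrite -mulr2n -scaler_nat scalerA mulVf ?scale1r // Num.Theory.pnatr_eq0. Qed.

Lemma half_sum_diff (R : numFieldType) (V : lmodType R) (x y : V) :
  2^-1 *: (x + y) + 2^-1 *: (x - y) = x /\ 2^-1 *: (x + y) - 2^-1 *: (x - y) = y.
Proof.
split; rewrite -?scalerDr -?scalerBr -[RHS]half_double; congr (_ *: _).
  by rewrite addrACA subrr addr0.
by rewrite opprB addrC addrA subrK.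
Qed.

Section Christoffel.
Variables (R : realFieldType) (A : algType R) (n m : nat) (d : 'I_n -> A -> A).
Hypothesis hd : derivation_family d.
Variables (X : 'rV[A]_m) (ginv : 'M[A]_n).
Local Notation F := (frame d X).
Local Notation DF i := (dmx d i (frame d X)).

(* Since the derivations commute, d_i E_j = d_j E_i. *)
Lemma DF_FT_sym i j l : (DF i *m F^T) j l = (DF j *m F^T) i l.
Proof. by rewrite !mxE; apply: eq_bigr => a _; rewrite !mxE (der_comm hd). Qed.

Lemma F_DFT_sym i j l : (F *m (DF i)^T) l j = (F *m (DF j)^T) l i.
Proof. by rewrite !mxE; apply: eq_bigr => a _; rewrite !mxE (der_comm hd). Qed.

Lemma d_metric i j l :
  d i (metric d X j l) = (DF i *m F^T) j l + (F *m (DF i)^T) j l.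
Proof.
rewrite metric_frame !mxE (der_sum hd) -big_split.
by apply: eq_bigr => a _; rewrite !mxE (derM hd).
Qed.

Lemma cGamma_frame i j l :
  cGamma d X i j l = 2^-1 *: ((DF i *m F^T) j l + (F *m (DF i)^T) l j).
Proof.
rewrite /cGamma !d_metric (DF_FT_sym j l) (F_DFT_sym i l j) (F_DFT_sym j i l).
by congr (_ *: _); rewrite opprD addrACA addrA addrA addrNK addrAC addrK.
Qed.

Lemma Ups_frame i j l :
  Ups d X i j l = 2^-1 *: ((DF i *m F^T) j l - (F *m (DF i)^T) l j).
Proof.
by congr (_ *: (_ - _)); rewrite !mxE; apply: eq_bigr => a _; rewrite !mxE.
Qed.

Lemma Gamma_frame_both i j l :
  Gamma d X i j l = (DF i *m F^T) j l /\ Gammat d X i j l = (F *m (DF i)^T) l j.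
Proof.
rewrite /Gamma /Gammat cGamma_frame Ups_frame.
exact: half_sum_diff.
Qed.

Lemma Gamma_frame i j l : Gamma d X i j l = (DF i *m F^T) j l.
Proof. by case: (Gamma_frame_both i j l). Qed.

Lemma Gammat_frame i j l : Gammat d X i j l = (F *m (DF i)^T) l j.
Proof. by case: (Gamma_frame_both i j l). Qed.

(* The raised Christoffel symbols as entries of d_i F F^t g^-1 and
   g^-1 F (d_i F)^t; the second form of GammaU uses d_k E_i = d_i E_k. *)
Lemma GammaU_frame i j k : GammaU d X ginv i j k = (DF i *m F^T *m ginv) j k.
Proof. by rewrite /GammaU mxE; apply: eq_bigr => l _; rewrite Gamma_frame. Qed.

Lemma GammaU_frame_swap i j k : GammaU d X ginv k i j = (DF i *m F^T *m ginv) k j.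
Proof. by rewrite /GammaU mxE; apply: eq_bigr => l _; rewrite Gamma_frame DF_FT_sym. Qed.

Lemma GammatU_frame i j k :
  GammatU d X ginv i j k = (ginv *m F *m (DF i)^T) k j.
Proof.
by rewrite /GammatU -mulmxA mxE; apply: eq_bigr => l _; rewrite Gammat_frame.
Qed.

End Christoffel.

Section Connections.
Variables (R : realFieldType) (A : algType R) (n m : nat) (d : 'I_n -> A -> A).
Variables (X : 'rV[A]_m) (ginv : 'M[A]_n).

Lemma nabla_row i p (M : 'M[A]_(p, m)) k :
  nabla d X ginv i (row k M) = row k (dmx d i M - M *m dmx d i (eproj d X ginv)).
Proof.
by apply/matrixP => x y; rewrite !mxE; congr (_ - _); apply: eq_bigr => t _; rewrite !mxE.
Qed.

Lemma nablat_col i p (M : 'M[A]_(m, p)) k :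
  nablat d X ginv i (col k M) = col k (dmx d i M - dmx d i (eproj d X ginv) *m M).
Proof.
by apply/matrixP => x y; rewrite !mxE; congr (_ - _); apply: eq_bigr => t _; rewrite !mxE.
Qed.

End Connections.

Section Projector.
Variables (R : realFieldType) (A : algType R) (n m : nat) (d : 'I_n -> A -> A).
Variables (X : 'rV[A]_m) (ginv : 'M[A]_n).
Hypothesis hginv_r : metric d X *m ginv = 1%:M.
Hypothesis hginv_l : ginv *m metric d X = 1%:M.
Local Notation F := (frame d X).
Local Notation e := (eproj d X ginv).

Lemma frame_coframe : F *m coframe d X ginv = 1%:M.
Proof. by rewrite /coframe mulmxA -metric_frame. Qed.

Lemma dual_frame_tr : dual_frame d X ginv *m F^T = 1%:M.
Proof. by rewrite /dual_frame -mulmxA -metric_frame. Qed.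

Lemma eproj_dual : e = F^T *m dual_frame d X ginv.
Proof. by rewrite eproj_frame /coframe /dual_frame mulmxA. Qed.

Lemma frame_eproj : F *m e = F.
Proof. by rewrite eproj_frame mulmxA frame_coframe mul1mx. Qed.

Lemma eproj_coframe : e *m coframe d X ginv = coframe d X ginv.
Proof. by rewrite eproj_frame -mulmxA frame_coframe mulmx1. Qed.

Lemma eproj_tr_frame : e *m F^T = F^T.
Proof. by rewrite eproj_dual -mulmxA dual_frame_tr mulmx1. Qed.

Lemma dual_frame_eproj : dual_frame d X ginv *m e = dual_frame d X ginv.
Proof. by rewrite eproj_dual mulmxA dual_frame_tr mul1mx. Qed.

End Projector.

Section FrameDerivatives.
Variables (R : realFieldType) (A : algType R) (n m : nat) (d : 'I_n -> A -> A).
Hypothesis hd : derivation_family d.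
Variables (X : 'rV[A]_m) (ginv : 'M[A]_n).
Hypothesis hginv_r : metric d X *m ginv = 1%:M.
Hypothesis hginv_l : ginv *m metric d X = 1%:M.
Variable i : 'I_n.
Local Notation D := (dmx d i).
Local Notation F := (frame d X).
Local Notation T := (coframe d X ginv).
Local Notation S := (dual_frame d X ginv).
Local Notation e := (eproj d X ginv).

Lemma nabla_frame : D F - F *m D e = D F *m F^T *m ginv *m F.
Proof.
by rewrite (dmx_right_fixed hd) ?frame_eproj // eproj_frame /coframe !mulmxA.
Qed.

Lemma nablat_coframe : D T - D e *m T = - (T *m (D F *m F^T *m ginv)).
Proof.
rewrite (dmx_left_fixed hd) ?eproj_coframe // eproj_frame -mulmxA.
rewrite -[F *m D T]opprK -(dmx_right_inverse hd) ?frame_coframe //.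
by rewrite mulmxN /coframe !mulmxA.
Qed.

Lemma nabla_dual_frame : D S - S *m D e = - (S *m (D F)^T *m S).
Proof.
rewrite (dmx_right_fixed hd) ?dual_frame_eproj // eproj_dual mulmxA.
by rewrite (dmx_right_inverse hd) ?dual_frame_tr // (dmx_tr d) mulNmx.
Qed.

Lemma nablat_tr_frame : D F^T - D e *m F^T = F^T *m (S *m (D F)^T).
Proof.
by rewrite (dmx_left_fixed hd) ?eproj_tr_frame // eproj_dual (dmx_tr d) mulmxA.
Qed.

End FrameDerivatives.

Unset Implicit Arguments.

Theorem lemma4p3 (R : realFieldType) (A : algType R) (n m : nat)
  (d : 'I_n -> A -> A) (X : 'rV[A]_m) (ginv : 'M[A]_n)
  (hd : derivation_family d)
  (hginv_r : metric d X *m ginv = 1%:M)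
  (hginv_l : ginv *m metric d X = 1%:M) :
  forall i j : 'I_n,
    nabla d X ginv i (E d X j) = \sum_k (GammaU d X ginv i j k)%:M *m E d X k /\
    nablat d X ginv i (Et d X ginv j) = - \sum_k Et d X ginv k *m (GammaU d X ginv k i j)%:M /\
    nabla d X ginv i (Eup d X ginv j) = - \sum_k (GammatU d X ginv i k j)%:M *m Eup d X ginv k /\
    nablat d X ginv i (E d X j)^T = \sum_k (E d X k)^T *m (GammatU d X ginv i j k)%:M.
Proof.
move=> i j; split; [|split; [|split]].
- under eq_bigr do rewrite (GammaU_frame hd) -row_frame.
  by rewrite -row_frame nabla_row row_sum_scalar nabla_frame.
- under eq_bigr do rewrite (GammaU_frame_swap hd) col_coframe.
  by rewrite col_sum_scalar col_coframe nablat_col nablat_coframe // linearN.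
- under eq_bigr do rewrite (GammatU_frame hd) row_dual_frame.
  rewrite row_sum_scalar row_dual_frame nabla_row nabla_dual_frame //.
  by rewrite /dual_frame !mulmxA linearN.
- under eq_bigr do rewrite (GammatU_frame hd) -col_tr_frame.
  by rewrite col_sum_scalar -col_tr_frame nablat_col nablat_tr_frame.
Qed.
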